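(* Let $\mathcal{H}$ be a complex Hilbert space and $T\in\mathbb{B}(\mathcal{H})$. Then the following conditions are equivalent: (i) $w_{\Omega}(T) = \frac{1}{2}\Omega(T)$; (ii) $\Omega(T) = 2\sqrt{2}\,\|{\rm Re}(e^{i\theta}T)\|$ for all $\theta \in \mathbb{R}$.
   Context: $\mathbb{B}(\mathcal{H})$ is the algebra of bounded linear operators on $\mathcal{H}$ and $\|\cdot\|$ the usual operator norm. Dragomir's norm is $\Omega(T)=\sup\{\|\zeta T+\eta T^*\|:\ \zeta,\eta\in\mathbb{C},\ |\zeta|^2+|\eta|^2\le 1\}$. For $A\in\mathbb{B}(\mathcal{H})$, ${\rm Re}(A)=\frac{A+A^*}{2}$, and $w_\Omega(T)=\sup_{\theta\in\mathbb{R}}\Omega\big({\rm Re}(e^{i\theta}T)\big)$. *)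

(* A complex Hilbert space is encoded
   explicitly: a C-module V (C = R[i], R : realType) with an inner product,
   complete for the induced norm. *)
From HB Require Import structures.
From mathcomp Require Import all_boot all_order all_algebra.
From mathcomp Require Import complex.
From mathcomp Require Import all_classical all_reals.
From mathcomp Require Import trigo.
Set Implicit Arguments. Unset Strict Implicit. Unset Printing Implicit Defensive.
Import Order.TTheory GRing.Theory Num.Theory.
Local Open Scope ring_scope.
Local Open Scope classical_set_scope.

Section Hilbert.
Variables (R : realType) (V : lmodType R[i]).
Implicit Types (ip : V -> V -> R[i]) (T S : V -> V).

Definition is_inner_product ip : Prop :=
  [/\ (forall (a : R[i]) x y z, ip (a *: x + y) z = a * ip x z + ip y z),
      (forall x y, ip y x = conjc (ip x y)),
      (forall x, complex.Im (ip x x) = 0 /\ 0 <= complex.Re (ip x x)) &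
      (forall x, ip x x = 0 -> x = 0)].

Definition hnorm ip (x : V) : R := Num.sqrt (complex.Re (ip x x)).

Definition hcomplete ip : Prop :=
  forall u : nat -> V,
    (forall e : R, 0 < e -> exists N : nat, forall m n : nat,
        (N <= m)%N -> (N <= n)%N -> hnorm ip (u m - u n) < e) ->
    exists l : V, forall e : R, 0 < e -> exists N : nat, forall n : nat,
        (N <= n)%N -> hnorm ip (u n - l) < e.

Definition is_hilbert ip : Prop := is_inner_product ip /\ hcomplete ip.

Definition bounded_linear ip T : Prop :=
  (forall (a : R[i]) x y, T (a *: x + y) = a *: T x + T y) /\
  exists M : R, forall x, hnorm ip (T x) <= M * hnorm ip x.

Definition is_adjoint ip T S : Prop := forall x y, ip (T x) y = ip x (S y).

Definition opnorm ip T : R :=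
  sup [set hnorm ip (T x) | x in [set x | hnorm ip x <= 1]].

(* Dragomir's norm  Omega(T) = sup { ||z T + w T^*|| : |z|^2+|w|^2 <= 1 },
   where Ts is the adjoint of T *)
Definition Omega ip T Ts : R :=
  sup [set opnorm ip (fun x => zw.1 *: T x + zw.2 *: Ts x) |
        zw in [set zw : R[i] * R[i] | `|zw.1| ^+ 2 + `|zw.2| ^+ 2 <= (1 : R[i])]].

Definition expi (t : R) : R[i] := Complex (cos t) (sin t).

Definition ReOp T Ts : V -> V := fun x => (2 : R[i])^-1 *: (T x + Ts x).

Definition rotOp (t : R) T : V -> V := fun x => expi t *: T x.
Definition rotOpAdj (t : R) Ts : V -> V := fun x => conjc (expi t) *: Ts x.

Definition ReRot (t : R) T Ts : V -> V := ReOp (rotOp t T) (rotOpAdj t Ts).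
Definition ReRotAdj (t : R) T Ts : V -> V := ReOp (rotOpAdj t Ts) (rotOp t T).

Definition wOmega ip T Ts : R :=
  sup [set Omega ip (ReRot t T Ts) (ReRotAdj t T Ts) | t in [set: R]].

End Hilbert.

(* For A = Re(e^{iθ}T) one has A^* = A, so ζA + ηA^* = (ζ + η)A, and |ζ + η| <= √2
   on the unit ball of C^2 with equality at ζ = η = 1/√2; hence
   w_Ω(T) = √2 w with w = sup_θ ||Re(e^{iθ}T)||.  On the other hand
   ζT + ηT^* = (ζ + η) Re T + i(η - ζ) Re(iT) and |ζ + η| + |ζ - η| <= 2 by the
   parallelogram law, so Ω(T) <= 2w.  Thus (i) gives √2 w = Ω(T)/2 <= w, forcing
   w = Ω(T) = 0, after which (ii) is trivial; conversely (ii) makes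
   ||Re(e^{iθ}T)|| = Ω(T)/(2√2) independent of θ.  Both conditions therefore
   amount to Ω(T) = 0. *)

From HB Require Import structures.
From mathcomp Require Import all_boot all_order all_algebra.
From mathcomp Require Import complex.
From mathcomp Require Import all_classical all_reals.
From mathcomp Require Import trigo.
From mathcomp Require Import ring lra.
Import Order.TTheory GRing.Theory Num.Theory Normc.
Local Open Scope ring_scope.
Local Open Scope complex_scope.
Local Open Scope classical_set_scope.
Set Implicit Arguments. Unset Strict Implicit.

Section ComplexModulus.
Variable R : rcfType.
Implicit Types z w : R[i].

Lemma normc_sqr z : normc z ^+ 2 = complex.Re z ^+ 2 + complex.Im z ^+ 2.
Proof. by case: z => a b; rewrite /= sqr_sqrtr // addr_ge0 ?sqr_ge0. Qed.

Lemma normc_ge0 z : 0 <= normc z.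
Proof. by case: z => a b; exact: sqrtr_ge0. Qed.

Lemma normc_real (r : R) : normc r%:C = `|r|.
Proof. by rewrite /= expr0n /= addr0 sqrtr_sqr. Qed.

Lemma normc_conj z : normc z^* = normc z.
Proof. by case: z => a b; rewrite /= sqrrN. Qed.

Lemma normc_i : normc 'i%C = 1 :> R.
Proof. by rewrite /= expr0n expr1n add0r sqrtr1. Qed.

Lemma normc_sqr_le1E z w :
  (`|z| ^+ 2 + `|w| ^+ 2 <= 1 :> R[i]) = (normc z ^+ 2 + normc w ^+ 2 <= 1).
Proof.
have normE (u : R[i]) : `|u| = (normc u)%:C by case: u.
by rewrite !normE -!rmorphXn -rmorphD lecR.
Qed.

Lemma normc_parallelogram z w :
  normc (z + w) ^+ 2 + normc (z - w) ^+ 2 = 2 * (normc z ^+ 2 + normc w ^+ 2).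
Proof.
by case: z w => a b [c d]; rewrite !normc_sqr /=; ring.
Qed.

Lemma normcD_le_sqrt2 z w :
  normc z ^+ 2 + normc w ^+ 2 <= 1 -> normc (z + w) <= Num.sqrt 2.
Proof.
move=> zw1; rewrite -[normc _]ger0_norm ?normc_ge0 // -sqrtr_sqr ler_sqrt //.
have := normc_parallelogram z w; have := sqr_ge0 (normc (z - w)); lra.
Qed.

Lemma normcD_normcB_le2 z w :
  normc z ^+ 2 + normc w ^+ 2 <= 1 -> normc (z + w) + normc (z - w) <= 2.
Proof.
move=> zw1; have := normc_parallelogram z w.
have := normc_ge0 (z + w); have := normc_ge0 (z - w).
set p := normc (z + w); set m := normc (z - w) => m0 p0 e.
have := sqr_ge0 (p - m); nra.
Qed.

End ComplexModulus.

Section InnerProduct.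
Variables (R : realType) (V : lmodType R[i]) (ip : V -> V -> R[i]).
Hypothesis ip_inner : is_inner_product ip.
Implicit Types x y z : V.

Lemma ipDl x y z : ip (x + y) z = ip x z + ip y z.
Proof. by case: ip_inner => lin _ _ _; have := lin 1 x y z; rewrite scale1r mul1r. Qed.

Lemma ip0l z : ip 0 z = 0.
Proof. by apply: (@addrI _ (ip 0 z)); rewrite -ipDl !addr0. Qed.

Lemma ipZl a x z : ip (a *: x) z = a * ip x z.
Proof. by case: ip_inner => lin _ _ _; have := lin a x 0 z; rewrite !addr0 ip0l addr0. Qed.

Lemma ipC x y : ip y x = (ip x y)^*.
Proof. by case: ip_inner. Qed.

Lemma ipDr z x y : ip z (x + y) = ip z x + ip z y.
Proof. by rewrite [LHS]ipC ipDl raddfD (ipC x z) (ipC y z). Qed.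

Lemma ipZr z a x : ip z (a *: x) = a^* * ip z x.
Proof. by rewrite [LHS]ipC ipZl rmorphM (ipC x z). Qed.

Lemma ip0r z : ip z 0 = 0.
Proof. by rewrite ipC ip0l raddf0. Qed.

Lemma ipxx_real x : ip x x = (complex.Re (ip x x))%:C.
Proof.
case: ip_inner => _ _ /(_ x) [im0 _] _.
by move: im0; case: (ip x x) => a b /= ->.
Qed.

Lemma Re_ipxx_ge0 x : 0 <= complex.Re (ip x x).
Proof. by case: ip_inner => _ _ /(_ x) []. Qed.

Lemma hnorm_sqr x : hnorm ip x ^+ 2 = complex.Re (ip x x).
Proof. by rewrite sqr_sqrtr // Re_ipxx_ge0. Qed.

Lemma hnorm_ge0 x : 0 <= hnorm ip x.
Proof. exact: sqrtr_ge0. Qed.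

Lemma hnorm0 : hnorm ip 0 = 0.
Proof. by rewrite /hnorm ip0l sqrtr0. Qed.

Lemma hnorm_eq0 x : hnorm ip x = 0 -> x = 0.
Proof.
case: ip_inner => _ _ _ definite /eqP; rewrite sqrtr_eq0 => x0.
apply: definite; rewrite ipxx_real; congr (_%:C).
by apply/le_anti; rewrite x0 Re_ipxx_ge0.
Qed.

Lemma Re_ipxx_lincomb (a b : R) x y :
  complex.Re (ip (a%:C *: x + b%:C *: y) (a%:C *: x + b%:C *: y)) =
  a ^+ 2 * hnorm ip x ^+ 2 + 2 * a * b * complex.Re (ip x y) + b ^+ 2 * hnorm ip y ^+ 2.
Proof.
rewrite !hnorm_sqr !ipDl !ipDr !ipZl !ipZr (ipC x y) (ipxx_real x) (ipxx_real y).
by case: (ip x y) => u v; simpc; rewrite /=; ring.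
Qed.

Lemma Re_ip_le x y : complex.Re (ip x y) <= hnorm ip x * hnorm ip y.
Proof.
have [y0|ypos] := eqVneq (hnorm ip y) 0.
  by rewrite (hnorm_eq0 y0) ip0r hnorm0 mulr0.
have ny0 : 0 < hnorm ip y by rewrite lt_def ypos hnorm_ge0.
(* 0 <= || |y|^2 x - Re<x,y> y ||^2 = |y|^2 (|x|^2 |y|^2 - Re<x,y>^2) *)
have := Re_ipxx_ge0 ((hnorm ip y ^+ 2)%:C *: x + (- complex.Re (ip x y))%:C *: y).
rewrite Re_ipxx_lincomb => h.
have := hnorm_ge0 x; set b := complex.Re (ip x y) => nx0.
have hb : b ^+ 2 <= (hnorm ip x * hnorm ip y) ^+ 2.
  by rewrite exprMn -(ler_pM2r (exprn_gt0 2 ny0)); nra.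
have := mulr_ge0 nx0 (ltW ny0); nra.
Qed.

Lemma ler_hnormD x y : hnorm ip (x + y) <= hnorm ip x + hnorm ip y.
Proof.
rewrite -ler_sqr ?nnegrE ?addr_ge0 ?hnorm_ge0 // hnorm_sqr ipDl !ipDr (ipC x y) sqrrD !hnorm_sqr.
have := Re_ip_le x y; rewrite (ipxx_real x) (ipxx_real y).
by case: (ip x y) => u v /=; simpc; rewrite /=; lra.
Qed.

Lemma hnormZ c x : hnorm ip (c *: x) = normc c * hnorm ip x.
Proof.
rewrite /hnorm ipZl ipZr ipxx_real mulrA.
rewrite -[normc c]ger0_norm ?normc_ge0 // -sqrtr_sqr -sqrtrM ?sqr_ge0 // normc_sqr.
by case: c => a b; congr Num.sqrt; simpc; rewrite /=; ring.
Qed.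

Lemma hnorm_adjoint_le T Ts (M : R) : 0 <= M -> is_adjoint ip T Ts ->
  (forall x, hnorm ip (T x) <= M * hnorm ip x) ->
  forall y, hnorm ip (Ts y) <= M * hnorm ip y.
Proof.
move=> M0 adj Tle y; set n := hnorm ip (Ts y).
have [->|n_neq0] := eqVneq n 0; first by rewrite mulr_ge0 ?hnorm_ge0.
have n_gt0 : 0 < n by rewrite lt_def n_neq0 hnorm_ge0.
(* |T^* y|^2 = Re <T T^* y, y> <= |T T^* y| |y| <= M |T^* y| |y| *)
rewrite -(ler_pM2l n_gt0) -expr2 hnorm_sqr -adj mulrCA.
apply: le_trans (Re_ip_le _ _) _.
by rewrite mulrA ler_wpM2r ?hnorm_ge0.
Qed.

End InnerProduct.

Section RealSup.
Variable R : realType.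
Implicit Types E : set R.

Lemma sup_ge0 E : E !=set0 -> (forall e, E e -> 0 <= e) -> 0 <= sup E.
Proof.
move=> [e Ee] E_ge0; have [Esup|/sup_out ->] := pselect (has_sup E) => //.
exact: le_trans (E_ge0 e Ee) (sup_upper_bound Esup Ee).
Qed.

Lemma le_sup_ubound E K e : ubound E K -> E e -> e <= sup E.
Proof. by move=> EK; apply: ub_le_sup; exists K. Qed.

Lemma sup_eq_max E x : E x -> ubound E x -> sup E = x.
Proof.
move=> Ex Ex_ub; apply/le_anti; rewrite ge_sup //=; last by exists x.
exact: le_sup_ubound Ex_ub Ex.
Qed.

Lemma sup_image_scale {T} (B : set T) (f : T -> R) (c K : R) :
  0 <= c -> B !=set0 -> (forall x, B x -> f x <= K) ->
  sup [set c * f x | x in B] = c * sup (f @` B).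
Proof.
move=> c0 [x0 Bx0] fK.
have fB_ub : ubound (f @` B) K by move=> _ [x Bx <-]; exact: fK.
have cfB_ub : ubound [set c * f x | x in B] (c * K).
  by move=> _ [x Bx <-]; rewrite ler_wpM2l ?fK.
apply/le_anti/andP; split.
  apply: ge_sup; first by exists (c * f x0), x0.
  move=> _ [x Bx <-]; rewrite ler_wpM2l //.
  by apply: le_sup_ubound fB_ub _; exists x.
have [->|c_neq0] := eqVneq c 0.
  by rewrite mul0r; apply: sup_ge0 => [|_ [x _ <-]]; [exists (0 * f x0), x0|rewrite mul0r].
have c_gt0 : 0 < c by rewrite lt_def c_neq0.
rewrite mulrC -ler_pdivlMr //; apply: ge_sup; first by exists (f x0), x0.
move=> _ [x Bx <-]; rewrite ler_pdivlMr // mulrC.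
by apply: le_sup_ubound cfB_ub _; exists x.
Qed.

End RealSup.

Section BoundedOperator.
Variables (R : realType) (V : lmodType R[i]) (ip : V -> V -> R[i]).
Hypothesis ip_inner : is_inner_product ip.
Variables (A : V -> V) (K : R).
Hypothesis A_ball : forall x, hnorm ip x <= 1 -> hnorm ip (A x) <= K.

Let ball0 : [set x | hnorm ip x <= 1] 0.
Proof. by rewrite /= hnorm0 // ler01. Qed.

Let image_ball_ub : ubound [set hnorm ip (A x) | x in [set x | hnorm ip x <= 1]] K.
Proof. by move=> _ [x x1 <-]; exact: A_ball. Qed.

Lemma opnorm_ge x : hnorm ip x <= 1 -> hnorm ip (A x) <= opnorm ip A.
Proof. by move=> x1; apply: le_sup_ubound image_ball_ub _; exists x. Qed.

Lemma opnorm_ge0 : 0 <= opnorm ip A.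
Proof. exact: le_trans (hnorm_ge0 _ _) (opnorm_ge ball0). Qed.

Lemma opnorm_le : opnorm ip A <= K.
Proof. by apply: ge_sup; first by exists (hnorm ip (A 0)), 0. Qed.

Lemma opnormZ c : opnorm ip (fun x => c *: A x) = normc c * opnorm ip A.
Proof.
rewrite /opnorm -(sup_image_scale (normc_ge0 c) (ex_intro _ 0 ball0) A_ball).
by congr sup; apply: eq_imagel => x _; rewrite hnormZ.
Qed.

Lemma Omega_self : Omega ip A A = Num.sqrt 2 * opnorm ip A.
Proof.
have opnorm_pair (zw : R[i] * R[i]) :
    opnorm ip (fun x => zw.1 *: A x + zw.2 *: A x) = normc (zw.1 + zw.2) * opnorm ip A.
  by rewrite -opnormZ; congr opnorm; apply: boolp.funext => x; rewrite scalerDl.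
rewrite /Omega (eq_imagel (fun zw _ => opnorm_pair zw)).
have sqrt2_sqr : Num.sqrt 2 ^+ 2 = 2 :> R by rewrite sqr_sqrtr.
have sqrt2_ge0 : 0 <= Num.sqrt 2 :> R by rewrite sqrtr_ge0.
apply: sup_eq_max => [|_ [[z w] /= zw1 <-]]; last first.
  by rewrite ler_wpM2r ?opnorm_ge0 // normcD_le_sqrt2 // -normc_sqr_le1E.
set r : R := Num.sqrt 2 / 2.
have r_ge0 : 0 <= r by rewrite divr_ge0.
exists (r%:C, r%:C) => /=.
  by rewrite normc_sqr_le1E normc_real ger0_norm // expr_div_n sqrt2_sqr; lra.
by rewrite addr0 expr0n /= addr0 sqrtr_sqr ger0_norm ?addr_ge0 // /r -splitr.
Qed.

End BoundedOperator.

Section Rotation.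
Variables (R : realType) (V : lmodType R[i]) (ip : V -> V -> R[i]).
Variables (T Ts : V -> V).

Lemma expi0 : expi 0 = 1 :> R[i].
Proof. by rewrite /expi cos0 sin0. Qed.

Lemma expi_pihalf : expi (pi / 2) = 'i%C :> R[i].
Proof. by rewrite /expi cos_pihalf sin_pihalf. Qed.

Lemma ReRotAdjE t : ReRotAdj t T Ts = ReRot t T Ts.
Proof. by apply: boolp.funext => x; rewrite /ReRotAdj /ReRot /ReOp addrC. Qed.

Lemma scale_sum_ReRot (z w : R[i]) x :
  z *: T x + w *: Ts x =
  (z + w) *: ReRot 0 T Ts x + ('i%C * (w - z)) *: ReRot (pi / 2) T Ts x.
Proof.
rewrite /ReRot /ReOp /rotOp /rotOpAdj expi0 expi_pihalf rmorph1.
have -> : 'i%C^* = - 'i%C :> R[i] by simpc.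
have i2 : 'i%C * 'i%C = -1 :> R[i] by rewrite -expr2 sqr_i.
have two_neq0 : 2 != 0 :> R[i] by rewrite pnatr_eq0.
rewrite !scalerDr !scalerA addrACA -!scalerDl.
congr (_ *: _ + _ *: _).
- transitivity (2^-1 * ((z + w) + (w - z) * ('i%C * 'i%C))); last by field.
  by rewrite i2; field.
- transitivity (2^-1 * ((z + w) - (w - z) * ('i%C * 'i%C))); last by field.
  by rewrite i2; field.
Qed.

(* By a classical identity this is the numerical radius of T. *)
Definition sup_norm_ReRot : R := sup [set opnorm ip (ReRot t T Ts) | t in [set: R]].

Hypothesis ip_inner : is_inner_product ip.
Variable K : R.
Hypotheses (K_ge0 : 0 <= K)
  (T_le : forall x, hnorm ip (T x) <= K * hnorm ip x)
  (Ts_le : forall x, hnorm ip (Ts x) <= K * hnorm ip x).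

Lemma ReRot_ball t x : hnorm ip x <= 1 -> hnorm ip (ReRot t T Ts x) <= K.
Proof.
move=> x1; rewrite /ReRot /ReOp /rotOp /rotOpAdj hnormZ //.
have -> : (2 : R[i])^-1 = (2^-1 : R)%:C by rewrite fmorphV rmorph_nat.
rewrite normc_real ger0_norm ?invr_ge0 //.
apply: le_trans (ler_wpM2l _ (ler_hnormD _ _ _)) _ => //; first by rewrite invr_ge0.
rewrite !hnormZ // normc_conj /expi /= cos2Dsin2 sqrtr1 !mul1r.
have := T_le x; have := Ts_le x; have := ler_wpM2l K_ge0 x1; rewrite mulr1; lra.
Qed.

Lemma Omega_ReRot t :
  Omega ip (ReRot t T Ts) (ReRotAdj t T Ts) = Num.sqrt 2 * opnorm ip (ReRot t T Ts).
Proof. by rewrite ReRotAdjE; exact: Omega_self (ReRot_ball t). Qed.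

Lemma opnorm_ReRot_le t : opnorm ip (ReRot t T Ts) <= sup_norm_ReRot.
Proof.
have ub : ubound [set opnorm ip (ReRot s T Ts) | s in [set: R]] K.
  by move=> _ [s _ <-]; exact: opnorm_le (ReRot_ball s).
by apply: le_sup_ubound ub _; exists t.
Qed.

Lemma opnorm_ReRot_ge0 t : 0 <= opnorm ip (ReRot t T Ts).
Proof. by apply: opnorm_ge0 (ReRot_ball t). Qed.

Lemma sup_norm_ReRot_ge0 : 0 <= sup_norm_ReRot.
Proof. exact: le_trans (opnorm_ReRot_ge0 0) (opnorm_ReRot_le 0). Qed.

Lemma wOmegaE : wOmega ip T Ts = Num.sqrt 2 * sup_norm_ReRot.
Proof.
have ReRot_le t (_ : [set: R] t) : opnorm ip (ReRot t T Ts) <= K.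
  exact: opnorm_le (ReRot_ball t).
rewrite /wOmega /sup_norm_ReRot -(sup_image_scale (sqrtr_ge0 2) (ex_intro _ 0 I) ReRot_le).
by congr sup; apply: eq_imagel => t _; exact: Omega_ReRot.
Qed.

Lemma Omega_le_sup_norm_ReRot : Omega ip T Ts <= 2 * sup_norm_ReRot.
Proof.
set W := sup_norm_ReRot.
apply: ge_sup => [|_ [[z w] /= zw1 <-]].
  by exists (opnorm ip (fun x => 0 *: T x + 0 *: Ts x)), (0, 0);
    rewrite //= normc_sqr_le1E normc0 expr0n /= addr0 ler01.
rewrite normc_sqr_le1E in zw1.
apply: ge_sup => [|_ [x /= x1 <-]].
  by exists (hnorm ip (z *: T 0 + w *: Ts 0)), 0; rewrite //= hnorm0 // ler01.
rewrite scale_sum_ReRot; apply: le_trans (ler_hnormD ip_inner _ _) _.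
rewrite (hnormZ ip_inner (z + w)) (hnormZ ip_inner ('i%C * _)).
rewrite normcM normc_i mul1r -[normc (w - z)]normcN opprB.
have bound t : hnorm ip (ReRot t T Ts x) <= W.
  exact: le_trans (opnorm_ge (ReRot_ball t) x1) (opnorm_ReRot_le t).
apply: le_trans (_ : normc (z + w) * W + normc (z - w) * W <= _).
  by apply: lerD; rewrite ler_wpM2l ?normc_ge0 ?bound.
by rewrite -mulrDl ler_wpM2r ?sup_norm_ReRot_ge0 ?normcD_normcB_le2.
Qed.

End Rotation.

Local Close Scope complex_scope.

Theorem theorem3p2 (R : realType) (V : lmodType R[i]) (ip : V -> V -> R[i])
  (HH : is_hilbert ip) (T Ts : V -> V)
  (HT : bounded_linear ip T) (Hadj : is_adjoint ip T Ts) :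
  wOmega ip T Ts = 2^-1 * Omega ip T Ts <->
  (forall t : R,
     Omega ip T Ts = 2 * Num.sqrt 2 * opnorm ip (ReRot t T Ts)).
Proof.
case: HH => ip_inner _; case: HT => _ [M T_le].
have K_ge0 := normr_ge0 M.
have T_leK x : hnorm ip (T x) <= `|M| * hnorm ip x.
  by apply: le_trans (T_le x) _; rewrite ler_wpM2r ?hnorm_ge0 ?ler_norm.
have Ts_leK := hnorm_adjoint_le ip_inner K_ge0 Hadj T_leK.
have Omega_le := Omega_le_sup_norm_ReRot ip_inner K_ge0 T_leK Ts_leK.
have opnorm_le := opnorm_ReRot_le ip_inner K_ge0 T_leK Ts_leK.
have opnorm_ge0 := opnorm_ReRot_ge0 ip_inner K_ge0 T_leK Ts_leK.
have w_ge0 := sup_norm_ReRot_ge0 ip_inner K_ge0 T_leK Ts_leK.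
rewrite (wOmegaE ip_inner K_ge0 T_leK Ts_leK).
set w := sup_norm_ReRot ip T Ts in Omega_le opnorm_le w_ge0 *.
set Om := Omega ip T Ts in Omega_le *.
have sqrt2_gt1 : 1 < Num.sqrt 2 :> R by rewrite -[X in X < _]sqrtr1 ltr_sqrt ?ltr1n.
split=> [wOm t | Om_eq].
- have w0 : w = 0 by apply/le_anti; rewrite w_ge0 andbT; nra.
  have opnorm0 : opnorm ip (ReRot t T Ts) = 0.
    by apply/le_anti; rewrite opnorm_ge0 andbT -w0.
  by move: wOm; rewrite opnorm0 w0 !mulr0; lra.
- have sqrt2_neq0 : Num.sqrt 2 != 0 :> R by rewrite gt_eqF // (lt_trans ltr01).
  have opnormE t : opnorm ip (ReRot t T Ts) = Om / (2 * Num.sqrt 2).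
    by rewrite (Om_eq t); field; rewrite sqrt2_neq0.
  have -> : w = Om / (2 * Num.sqrt 2).
    by apply: sup_eq_max => [|_ [t _ <-]]; [exists 0 | rewrite opnormE].
  by field.
Qed.
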